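(* Let $m,n\ge1$, $\mathcal{H}=\mathbb{R}^{m\times n}$ with $\langle\mathbf{A},\mathbf{B}\rangle_{\mathcal{H}}=\mathbf{A}^\intercal\mathbf{B}$, and let $\mathbf{V}\in\mathbb{R}^{n\times n}$ be a nonzero symmetric matrix such that $\langle\langle\mathbf{X},\mathbf{X}\rangle_{\mathcal{H}},\mathbf{V}/\|\mathbf{V}\|\rangle\ge0$ for all $\mathbf{X}\in\mathcal{H}$; set $\|\mathbf{X}\|_{\mathcal{H}}(\mathbf{V})=\big(\langle\langle\mathbf{X},\mathbf{X}\rangle_{\mathcal{H}},\mathbf{V}/\|\mathbf{V}\|\rangle\big)^{1/2}$. Let $\mathcal{S}=(\mathbf{X}_1,\dots,\mathbf{X}_N)$ be a finite sequence of matrices in $\mathcal{H}$ and define $$\mathcal{H}\circ\mathcal{S}=\Big\{\Big(\big\langle\langle\mathbf{W},\mathbf{X}_1\rangle_{\mathcal{H}},\tfrac{\mathbf{V}}{\|\mathbf{V}\|}\big\rangle,\dots,\big\langle\langle\mathbf{W},\mathbf{X}_N\rangle_{\mathcal{H}},\tfrac{\mathbf{V}}{\|\mathbf{V}\|}\big\rangle\Big):\ \|\mathbf{W}\|_{\mathcal{H}}(\mathbf{V})\le1\Big\}\subseteq\mathbb{R}^N.$$ Then $R(\mathcal{H}\circ\mathcal{S})\le\dfrac{\max_i\|\mathbf{X}_i\|_{\mathcal{H}}(\mathbf{V})}{\sqrt N}$.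
   Context: $\langle\cdot,\cdot\rangle$ is the Frobenius inner product and $\|\cdot\|$ the Frobenius norm. For $\mathcal{A}\subseteq\mathbb{R}^N$, the Rademacher complexity is $R(\mathcal{A})=\frac1N\mathbb{E}_{\bm\sigma}\big[\sup_{\mathbf{a}\in\mathcal{A}}\sum_{i=1}^N\sigma_ia_i\big]$, where $\sigma_1,\dots,\sigma_N$ are i.i.d. uniform on $\{\pm1\}$. *)

From HB Require Import structures.
From mathcomp Require Import all_boot all_order all_algebra.
From mathcomp Require Import all_classical all_reals ereal.
Set Implicit Arguments. Unset Strict Implicit. Unset Printing Implicit Defensive.
Import Order.TTheory GRing.Theory Num.Theory.
Local Open Scope ring_scope.
Local Open Scope classical_set_scope.

Definition frob {R : realType} {p q : nat} (A B : 'M[R]_(p, q)) : R :=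
  \sum_(i < p) \sum_(j < q) A i j * B i j.

Definition frob_norm {R : realType} {p q : nat} (A : 'M[R]_(p, q)) : R :=
  Num.sqrt (frob A A).

Definition ipH {R : realType} {m n : nat} (A B : 'M[R]_(m, n)) : 'M[R]_n :=
  A^T *m B.

Definition Vn {R : realType} {n : nat} (V : 'M[R]_n) : 'M[R]_n :=
  (frob_norm V)^-1 *: V.

Definition normHV {R : realType} {m n : nat} (V : 'M[R]_n) (X : 'M[R]_(m, n)) : R :=
  Num.sqrt (frob (ipH X X) (Vn V)).

Definition HcompS {R : realType} {m n N : nat} (V : 'M[R]_n)
    (X : 'I_N -> 'M[R]_(m, n)) : set 'rV[R]_N :=
  [set a | exists W : 'M[R]_(m, n),
      normHV V W <= 1 /\ a = \row_(i < N) frob (ipH W (X i)) (Vn V)].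

(* Rademacher complexity, expectation over sigma uniform on {-1,1}^N
   (sigma encoded by b : {ffun 'I_N -> bool}, sigma_i = 1 if b i, else -1).
   The sup is taken in the extended reals to avoid junk values. *)
Definition sgn_of (b : bool) {R : realType} : R := if b then 1 else -1.

Definition rademacher {R : realType} {N : nat} (A : set 'rV[R]_N) : \bar R :=
  ((N%:R)^-1 * (2 ^+ N)^-1)%:E *
  \sum_(b : {ffun 'I_N -> bool})
     ereal_sup [set (\sum_(i < N) sgn_of (b i) * a ord0 i)%:E | a in A].

From HB Require Import structures.
From mathcomp Require Import all_boot all_order all_algebra.
From mathcomp Require Import all_classical all_reals ereal.
From mathcomp Require Import ring lra.
Import Order.TTheory GRing.Theory Num.Theory.
Local Open Scope ring_scope.

(* [B(W, X) = <<W, X>_H, V / |V|>] is a symmetric positive semidefinite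
   bilinear form, so for a fixed sign vector [s] the supremum over the unit
   ball of [sum_i s_i B(W, X_i) = B(W, sum_i s_i X_i)] is at most
   [sqrt B(Y_s, Y_s)] with [Y_s = sum_i s_i X_i] (Cauchy-Schwarz).  Averaged
   over all signs the cross terms of [B(Y_s, Y_s)] cancel, leaving
   [sum_i B(X_i, X_i) <= N max_i |X_i|^2]; concavity of the square root
   ([sum_s sqrt q_s <= sqrt (2^N sum_s q_s)]) then bounds the Rademacher
   complexity by [N^-1 sqrt (N max_i |X_i|^2) = max_i |X_i| / sqrt N]. *)

Lemma sum_sqrt_le {R : rcfType} {I : finType} (q : I -> R) :
  (forall i, 0 <= q i) ->
  \sum_i Num.sqrt (q i) <= Num.sqrt (#|I|%:R * \sum_i q i).
Proof.
move=> q_ge0; set s := fun i => Num.sqrt (q i).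
have sq_s i : s i ^+ 2 = q i by rewrite sqr_sqrtr.
have sum_s_ge0 : 0 <= \sum_i s i by apply: sumr_ge0 => i _; apply: sqrtr_ge0.
rewrite -[leLHS]ger0_norm // -sqrtr_sqr ler_sqrt ?mulr_ge0 ?sumr_ge0 //.
have amgm i j : s i * s j <= (q i + q j) / 2.
  by rewrite -!sq_s; have := sqr_ge0 (s i - s j); lra.
have sum_pairs : \sum_i \sum_j (q i + q j) = 2 * (#|I|%:R * \sum_i q i).
  under eq_bigr do rewrite big_split /=.
  rewrite big_split /= [X in X + _]exchange_big /= !sumr_const mulr_natl; ring.
rewrite expr2 mulr_suml; under eq_bigr do rewrite mulr_sumr.
apply: le_trans (ler_sum _ (fun i _ => ler_sum _ (fun j _ => amgm i j))) _.
under eq_bigr do rewrite -mulr_suml.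
by rewrite -mulr_suml sum_pairs; lra.
Qed.

Section RademacherSigns.
Variables (R : realType) (N : nat).

Definition negb_at (i : 'I_N) (b : {ffun 'I_N -> bool}) : {ffun 'I_N -> bool} :=
  [ffun k => if k == i then ~~ b k else b k].

Lemma negb_atK i : involutive (negb_at i).
Proof.
by move=> b; apply/ffunP => k; rewrite !ffunE; case: eqP => // _; rewrite negbK.
Qed.

Lemma card_signs : #|{ffun 'I_N -> bool}| = (2 ^ N)%N.
Proof. by rewrite card_ffun card_bool card_ord. Qed.

(* Distinct Rademacher signs are uncorrelated: negating the [i]-th sign is a
   bijection of the sign vectors that changes the sign of each summand. *)
Lemma sum_sgn_ofM (i j : 'I_N) :
  \sum_(b : {ffun 'I_N -> bool}) sgn_of (b i) * sgn_of (b j) =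
    if i == j then 2 ^+ N else 0 :> R.
Proof.
have [<-|ij] := eqVneq i j.
  rewrite (eq_bigr (fun=> 1)) => [|b _]; last by rewrite /sgn_of; case: (b i) => /=; lra.
  by rewrite sumr_const card_signs natrX.
set s := LHS; suff : s = - s by lra.
rewrite {1}/s (reindex_inj (can_inj (negb_atK i))) -sumrN.
apply: eq_bigr => b _; rewrite !ffunE eqxx eq_sym (negbTE ij).
by rewrite /sgn_of; case: (b i); case: (b j) => /=; lra.
Qed.

End RademacherSigns.

Definition signed_sum {R : realType} {T : lmodType R} {N : nat}
    (x : 'I_N -> T) (b : {ffun 'I_N -> bool}) : T :=
  \sum_i sgn_of (b i) *: x i.

Section PsdSymmetricForm.
Context {R : realType} {T : lmodType R} {form : T -> T -> R}.
Hypothesis formDl : forall x y z, form (x + y) z = form x z + form y z.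
Hypothesis formZl : forall a x y, form (a *: x) y = a * form x y.
Hypothesis formC : forall x y, form x y = form y x.
Hypothesis form_ge0 : forall x, 0 <= form x x.

Lemma formDr x y z : form x (y + z) = form x y + form x z.
Proof. by rewrite formC formDl !(formC x). Qed.

Lemma formZr a x y : form x (a *: y) = a * form x y.
Proof. by rewrite formC formZl formC. Qed.

Lemma form_suml (I : finType) (F : I -> T) y :
  form (\sum_i F i) y = \sum_i form (F i) y.
Proof.
have form0l : form 0 y = 0 by rewrite -(scale0r 0) formZl mul0r.
exact: (big_morph (form^~ y) (fun a b => formDl a b y) form0l).
Qed.

Lemma form_sumr (I : finType) x (F : I -> T) :
  form x (\sum_i F i) = \sum_i form x (F i).
Proof. by rewrite formC form_suml; apply: eq_bigr => i _; rewrite formC. Qed.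

(* For [t > 0], expanding [0 <= form (t w - s) (t w - s)] gives
   [2 t form w s <= t ^+ 2 + form s s]; take [t = sqrt (form s s)], or
   [t = form w s] when [form s s = 0]. *)
Lemma form_le_sqrt w s : form w w <= 1 -> form w s <= Num.sqrt (form s s).
Proof.
move=> w_le1.
have quad t : 0 < t -> 2 * t * form w s <= t ^+ 2 + form s s.
  move=> t_gt0; have := form_ge0 (t *: w - s).
  rewrite formDl !formDr !formZl !formZr -!scaleN1r !formZl !formZr (formC s w).
  have : t ^+ 2 * form w w <= t ^+ 2 by rewrite ler_piMr // exprn_ge0 // ltW.
  nra.
have sq_sqrt := sqr_sqrtr (form_ge0 s).
have [sqrt_gt0|] := ltrP 0 (Num.sqrt (form s s)).
  by have := quad _ sqrt_gt0; rewrite sq_sqrt; nra.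
move=> sqrt_le0; have sqrt0 : Num.sqrt (form s s) = 0.
  by apply/eqP; rewrite eq_le sqrt_le0 sqrtr_ge0.
have [ws_gt0|] := ltrP 0 (form w s); last by rewrite sqrt0.
by have := quad _ ws_gt0; rewrite -sq_sqrt sqrt0; nra.
Qed.

Lemma sum_form_signed_sum (N : nat) (x : 'I_N -> T) :
  \sum_b form (signed_sum x b) (signed_sum x b) = 2 ^+ N * \sum_i form (x i) (x i).
Proof.
have expand b : form (signed_sum x b) (signed_sum x b) =
    \sum_i \sum_j sgn_of (b i) * sgn_of (b j) * form (x i) (x j).
  rewrite form_suml; apply: eq_bigr => i _.
  rewrite formZl form_sumr mulr_sumr; apply: eq_bigr => j _.
  by rewrite formZr mulrA.
rewrite (eq_bigr _ (fun b _ => expand b)) exchange_big mulr_sumr.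
apply: eq_bigr => i _; rewrite exchange_big /=.
under eq_bigr do rewrite -mulr_suml sum_sgn_ofM.
rewrite (bigD1 i) //= eqxx big1 ?addr0 // => j ji.
by rewrite eq_sym (negbTE ji) mul0r.
Qed.

Lemma sum_sqrt_form_signed_sum_le (N : nat) (x : 'I_N -> T) :
  \sum_b Num.sqrt (form (signed_sum x b) (signed_sum x b)) <=
    2 ^+ N * Num.sqrt (\sum_i form (x i) (x i)).
Proof.
apply: le_trans (sum_sqrt_le _ (fun b => form_ge0 _)) _.
rewrite sum_form_signed_sum card_signs natrX mulrA -expr2.
by rewrite sqrtrM ?exprn_ge0 // sqrtr_sqr ger0_norm ?exprn_ge0.
Qed.

End PsdSymmetricForm.

Lemma sqrtr_le {R : rcfType} (a b : R) : 0 <= b -> (Num.sqrt a <= b) = (a <= b ^+ 2).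
Proof. by move=> b_ge0; rewrite -ler_sqrt ?exprn_ge0 // sqrtr_sqr ger0_norm. Qed.

Section FrobeniusProduct.
Variables (R : realType) (p q : nat).
Implicit Types A B C : 'M[R]_(p, q).

Lemma frobDl A B C : frob (A + B) C = frob A C + frob B C.
Proof.
rewrite /frob -big_split; apply: eq_bigr => i _.
by rewrite -big_split; apply: eq_bigr => j _; rewrite mxE mulrDl.
Qed.

Lemma frobZl a A C : frob (a *: A) C = a * frob A C.
Proof.
rewrite /frob mulr_sumr; apply: eq_bigr => i _.
by rewrite mulr_sumr; apply: eq_bigr => j _; rewrite mxE mulrA.
Qed.

Lemma frob_trmx A B : frob A^T B^T = frob A B.
Proof.
rewrite /frob exchange_big; apply: eq_bigr => i _.
by apply: eq_bigr => j _; rewrite !mxE.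
Qed.

End FrobeniusProduct.

Definition formHV {R : realType} {m n : nat} (V : 'M[R]_n) (W X : 'M[R]_(m, n)) : R :=
  frob (ipH W X) (Vn V).

Section FormHV.
Context {R : realType} {m n : nat} (V : 'M[R]_n).
Implicit Types W X : 'M[R]_(m, n).
Hypothesis V_sym : V^T = V.
Hypothesis formHV_ge0 : forall X : 'M[R]_(m, n), 0 <= formHV V X X.

Lemma formHVDl W1 W2 X : formHV V (W1 + W2) X = formHV V W1 X + formHV V W2 X.
Proof. by rewrite /formHV /ipH linearD /= mulmxDl frobDl. Qed.

Lemma formHVZl a W X : formHV V (a *: W) X = a * formHV V W X.
Proof. by rewrite /formHV /ipH linearZ /= -scalemxAl frobZl. Qed.

Lemma formHVC W X : formHV V W X = formHV V X W.
Proof.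
have VnT : (Vn V)^T = Vn V by rewrite /Vn linearZ /= V_sym.
by rewrite /formHV /ipH -frob_trmx trmx_mul trmxK VnT.
Qed.

Lemma HcompS_ereal_sup_le (N : nat) (X : 'I_N -> 'M[R]_(m, n))
    (b : {ffun 'I_N -> bool}) :
  (ereal_sup [set (\sum_i sgn_of (b i) * a ord0 i)%:E | a in HcompS V X] <=
    (Num.sqrt (formHV V (signed_sum X b) (signed_sum X b)))%:E)%E.
Proof.
set Y := signed_sum X b; apply: ge_ereal_sup => _ [_ [W [W_le1 ->]] <-].
rewrite lee_fin (_ : \sum_i _ = formHV V W Y).
  apply: form_le_sqrt formHVDl formHVZl formHVC formHV_ge0 _ _ _.
  by rewrite -(expr1n _ 2) -sqrtr_le.
rewrite (form_sumr formHVDl formHVZl formHVC).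
by apply: eq_bigr => i _; rewrite mxE (formZr formHVZl formHVC).
Qed.

End FormHV.

Lemma rademacher_le {R : realType} {N : nat} (A : set 'rV[R]_N)
    (f : {ffun 'I_N -> bool} -> R) :
  (forall b : {ffun 'I_N -> bool},
    ereal_sup [set (\sum_i sgn_of (b i) * a ord0 i)%:E | a in A] <= (f b)%:E)%E ->
  (rademacher A <= ((N%:R)^-1 * (2 ^+ N)^-1 * \sum_b f b)%:E)%E.
Proof.
move=> sup_le; rewrite /rademacher [leRHS]EFinM -sumEFin.
by apply: lee_wpmul2l; [rewrite lee_fin mulr_ge0 ?invr_ge0 ?exprn_ge0 | exact: lee_sum].
Qed.

Theorem lemma3 (R : realType) (m n N : nat) (hm : (0 < m)%N) (hn : (0 < n)%N)
    (hN : (0 < N)%N) (V : 'M[R]_n) (hV0 : V != 0) (hVsym : V^T = V)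
    (hVpsd : forall X : 'M[R]_(m, n), 0 <= frob (ipH X X) (Vn V))
    (X : 'I_N -> 'M[R]_(m, n)) :
  (rademacher (HcompS V X) <=
    ((\big[Num.max/0]_(i < N) normHV V (X i)) / Num.sqrt (N%:R))%:E)%E.
Proof.
set M := \big[Num.max/0]_(i < N) normHV V (X i).
have M_ge0 : 0 <= M := bigmax_ge_id _ _ _ _.
have formX_le i : formHV V (X i) (X i) <= M ^+ 2.
  by rewrite -sqrtr_le //; apply: le_bigmax.
pose q b := formHV V (signed_sum X b) (signed_sum X b).
apply: le_trans (rademacher_le _ (fun b => Num.sqrt (q b)) _) _.
  exact: HcompS_ereal_sup_le.
have r_sq : Num.sqrt N%:R ^+ 2 = N%:R :> R by rewrite sqr_sqrtr ?ler0n.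
set r := Num.sqrt N%:R in r_sq *.
have r_gt0 : 0 < r by rewrite sqrtr_gt0 ltr0n.
have sum_le : \sum_b Num.sqrt (q b) <= 2 ^+ N * (r * M).
  apply: le_trans (sum_sqrt_form_signed_sum_le
    (formHVDl V) (formHVZl V) (formHVC V hVsym) hVpsd _ X) _.
  rewrite ler_wpM2l ?exprn_ge0 // sqrtr_le ?mulr_ge0 ?(ltW r_gt0) // exprMn r_sq.
  apply: le_trans (ler_sum _ (fun i _ => formX_le i)) _.
  by rewrite sumr_const card_ord mulr_natl.
rewrite lee_fin; apply: le_trans (ler_wpM2l _ sum_le) _.
  by rewrite mulr_ge0 ?invr_ge0 ?exprn_ge0.
suff -> : N%:R^-1 / 2 ^+ N * (2 ^+ N * (r * M)) = M / r by [].
by rewrite -r_sq; field; rewrite !gt_eqF ?exprn_gt0.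
Qed.
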